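(* Any satisfiable $d$-dim linear system $S$ has a solution $x\in\mathbb{Z}^d$ such that $\|x\|_1\leq \mathrm{lcm}(S)\cdot\left(d+\left(2+d+d^{2}\cdot\|S\|\right)^{2d+1}\right)$.
   Context: For a variable $\mathbf{x}$ ranging over $\mathbb{Z}^d$: an equality constraint is $\langle\alpha,\mathbf{x}\rangle=c$ and an inequality constraint is $\langle\alpha,\mathbf{x}\rangle\geq c$, with $\alpha\in\mathbb{Z}^d$, $c\in\mathbb{Z}$; a divisibility constraint is $\langle\alpha,\mathbf{x}\rangle\equiv c \pmod m$ with $m\in\mathbb{N}_+$, $\alpha\in[0,m-1]^d$, $c\in[0,m-1]$. A $d$-dim linear system $S$ is a propositional formula (boolean combination) whose atoms are such constraints for the fixed variable $\mathbf{x}$; its solutions are the $x\in\mathbb{Z}^d$ satisfying it, and $S$ is satisfiable if it has a solution. $\|S\|$ is the least $s\in\mathbb{N}$ with $\max\{\|\alpha\|,|c|\}\leq s$ for all equality and inequality constraints in $S$ (where $\|\alpha\|=\max_i|\alpha(i)|$), and $\mathrm{lcm}(S)$ is the least common multiple of all moduli $m$ of divisibility constraints in $S$ (equal to $1$ if there are none). $\|x\|_1=\sum_i|x(i)|$. *)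

From mathcomp Require Import all_boot all_order all_algebra.
Set Implicit Arguments. Unset Strict Implicit. Unset Printing Implicit Defensive.
Import Order.TTheory GRing.Theory Num.Theory.
Local Open Scope ring_scope.

Inductive constr (d : nat) : Type :=
| CEq  of ('I_d -> int) & int
| CGe  of ('I_d -> int) & int
| CDvd of nat & ('I_d -> nat) & nat.       (* <alpha, x> = c (mod m) *)

Inductive lsys (d : nat) : Type :=
| LTrue | LFalse
| LAtom of constr d
| LNot of lsys d
| LAnd of lsys d & lsys d
| LOr of lsys d & lsys d.

Definition dotp d (a x : 'I_d -> int) : int := \sum_(i < d) a i * x i.

Definition constr_wf d (k : constr d) : bool :=
  match k with
  | CDvd m a c => [&& (0 < m)%N, [forall i, (a i < m)%N] & (c < m)%N]
  | _ => true
  end.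

Fixpoint lsys_wf d (S : lsys d) : bool :=
  match S with
  | LTrue | LFalse => true
  | LAtom k => constr_wf k
  | LNot S1 => lsys_wf S1
  | LAnd S1 S2 | LOr S1 S2 => lsys_wf S1 && lsys_wf S2
  end.

Definition constr_sat d (k : constr d) (x : 'I_d -> int) : bool :=
  match k with
  | CEq a c => dotp a x == c
  | CGe a c => dotp a x >= c
  | CDvd m a c => (dotp (fun i => (a i)%:Z) x == c%:Z %[mod m%:Z])%Z
  end.

Fixpoint lsys_sat d (S : lsys d) (x : 'I_d -> int) : bool :=
  match S with
  | LTrue => true
  | LFalse => false
  | LAtom k => constr_sat k x
  | LNot S1 => ~~ lsys_sat S1 x
  | LAnd S1 S2 => lsys_sat S1 x && lsys_sat S2 x
  | LOr S1 S2 => lsys_sat S1 x || lsys_sat S2 x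
  end.

Definition vnorm d (a : 'I_d -> int) : nat := \max_(i < d) `|a i|%N.

Definition constr_norm d (k : constr d) : nat :=
  match k with
  | CEq a c | CGe a c => maxn (vnorm a) `|c|%N
  | CDvd _ _ _ => 0%N
  end.

Fixpoint lsys_norm d (S : lsys d) : nat :=
  match S with
  | LTrue | LFalse => 0%N
  | LAtom k => constr_norm k
  | LNot S1 => lsys_norm S1
  | LAnd S1 S2 | LOr S1 S2 => maxn (lsys_norm S1) (lsys_norm S2)
  end.

Definition constr_lcm d (k : constr d) : nat :=
  match k with
  | CDvd m _ _ => m
  | _ => 1%N
  end.

Fixpoint lsys_lcm d (S : lsys d) : nat :=
  match S with
  | LTrue | LFalse => 1%N
  | LAtom k => constr_lcm k
  | LNot S1 => lsys_lcm S1
  | LAnd S1 S2 | LOr S1 S2 => lcmn (lsys_lcm S1) (lsys_lcm S2)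
  end.

Definition norm1 d (x : 'I_d -> int) : nat := \sum_(i < d) `|x i|%N.

(* Fix a solution [x0] and let [L = lcm(S)]. For [x = L q + (x0 mod L)] every
   divisibility atom of [S] keeps its value at [x0], and so do the (in)equality atoms as
   soon as [q] satisfies a system of linear inequalities [a.q >= b] with [|a| <= ||S||]
   and [|b| <= d ||S|| + ||S|| + 1], which [q0 = x0 div L] satisfies.
   Such a system has a small integral solution. Restricted to the orthant of [q0] and
   homogenized with a variable [t >= 0], its solution set is a pointed cone, so [(q0, 1)]
   is a nonnegative combination of at most [d + 1] integral rays, each with entries
   bounded by Cramer's rule. A ray with [t = 0] and coefficient [> 1] can be subtracted,
   which shrinks [|q|_1]; otherwise all coefficients are at most [1], which bounds [q]. *)

From HB Require Import structures.
From mathcomp Require Import all_boot all_order all_algebra all_fingroup.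
From mathcomp Require Import zify ring lra.
Set Implicit Arguments. Unset Strict Implicit. Unset Printing Implicit Defensive.
Import Order.TTheory GRing.Theory Num.Theory.
Local Open Scope ring_scope.

Lemma normr_det_le (R : numDomainType) k (A : 'M[R]_k) (m : R) :
  (forall i j, `|A i j| <= m) -> `|\det A| <= k`!%:R * m ^+ k.
Proof.
move=> A_le; rewrite /determinant; apply: le_trans (ler_norm_sum _ _ _) _.
have term_le (s : 'S_k) : `|(-1) ^+ s * \prod_i A i (s i)| <= m ^+ k.
  rewrite normrM normrX normrN1 expr1n mul1r normr_prod.
  rewrite -[k in m ^+ k]card_ord -prodr_const.
  by apply: ler_prod => i _; rewrite normr_ge0 A_le.
apply: le_trans (ler_sum _ (fun s _ => term_le s)) _.
by rewrite sumr_const card_Sn mulr_natl.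
Qed.

Lemma ler_sum_inj (R : numDomainType) k N (f : 'I_k -> 'I_N) (F : 'I_N -> R) :
  injective f -> (forall i, 0 <= F i) -> \sum_(j < k) F (f j) <= \sum_(i < N) F i.
Proof.
move=> f_inj F_ge0.
have -> : \sum_(j < k) F (f j) = \sum_(j in [set: 'I_k]) F (f j).
  by apply: eq_bigl => j; rewrite inE.
rewrite -(big_imset _ (h := f)) /=; last by move=> ? ? _ _ /f_inj.
rewrite [X in _ <= X](bigID [in f @: [set: 'I_k]]) /= lerDl.
exact: sumr_ge0.
Qed.

Lemma seq_argmin (T : eqType) (R : realDomainType) (s : seq T) (f : T -> R) :
  s != [::] -> exists2 x, x \in s & forall y, y \in s -> f x <= f y.
Proof.
elim: s => // a s IH _; have [->|/IH [b bs hb]] := eqVneq s [::].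
  by exists a; rewrite ?mem_head // => y; rewrite inE => /eqP ->.
have [ab|ba] := lerP (f a) (f b).
  exists a; rewrite ?mem_head // => y; rewrite inE => /predU1P [->//|/hb].
  exact: le_trans.
exists b; rewrite ?inE ?bs ?orbT // => y /predU1P [->|/hb //]; exact: ltW.
Qed.

Section Polyhedra.
Variable n : nat.

Definition form (a : 'rV[int]_n) (y : 'rV[rat]_n) : rat := \sum_i (a 0 i)%:~R * y 0 i.

Fact form_is_linear a : linear_for *%R (form a).
Proof.
move=> t y z; rewrite /form mulr_sumr -big_split /=.
by apply: eq_bigr => i _; rewrite !mxE mulrDr mulrCA.
Qed.

HB.instance Definition _ a :=
  GRing.isLinear.Build rat 'rV[rat]_n rat _ (form a) (form_is_linear a).

Lemma formZ a t y : form a (t *: y) = t * form a y.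
Proof. exact: linearZ. Qed.

Lemma formNl a y : form (- a) y = - form a y.
Proof. by rewrite /form -sumrN; apply: eq_bigr => i _; rewrite mxE intrN mulNr. Qed.

Definition cstr := ('rV[int]_n * int)%type.

Definition cstr0 : cstr := (0, 0).

Definition feasible (cs : seq cstr) y := all (fun c : cstr => c.2%:~R <= form c.1 y) cs.
Definition tight (cs : seq cstr) y := [seq c <- cs | form c.1 y == c.2%:~R].
Definition pointed (cs : seq cstr) :=
  forall w : 'rV[rat]_n, w != 0 -> exists2 c, c \in cs & form c.1 w != 0.

Definition cstr_mx (l : seq cstr) : 'M[rat]_(size l, n) :=
  \matrix_(i, j) ((nth cstr0 l i).1 0 j)%:~R.
Definition tight_rank cs y := \rank (cstr_mx (tight cs y)).

Lemma tight_rank_le cs y : (tight_rank cs y <= n)%N.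
Proof. exact: rank_leq_col. Qed.

Lemma cstr_mx_mul l (w : 'rV[rat]_n) i :
  (cstr_mx l *m w^T) i 0 = form (nth cstr0 l i).1 w.
Proof. by rewrite !mxE; apply: eq_bigr => j _; rewrite !mxE. Qed.

Lemma cstr_mx_rank_lt (l l' : seq cstr) w :
  {subset l <= l'} -> (forall c, c \in l -> form c.1 w = 0) ->
  (exists2 c, c \in l' & form c.1 w != 0) ->
  (\rank (cstr_mx l) < \rank (cstr_mx l'))%N.
Proof.
move=> sub_ll' lw0 [c cl' cw]; apply: rank_ltmx; rewrite ltmxE; apply/andP; split.
  apply/row_subP => i; have /sub_ll' il' : nth cstr0 l i \in l by exact: mem_nth.
  have jlt : (index (nth cstr0 l i) l' < size l')%N by rewrite index_mem.
  have -> : row i (cstr_mx l) = row (Ordinal jlt) (cstr_mx l').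
    by apply/matrixP => a b; rewrite !mxE /= nth_index.
  exact: row_sub.
apply/negP => sub_l'l; have jlt : (index c l' < size l')%N by rewrite index_mem.
have /submxP [D eD] := submx_trans (row_sub (Ordinal jlt) (cstr_mx l')) sub_l'l.
have lw : cstr_mx l *m w^T = 0.
  by apply/matrixP => a b; rewrite ord1 cstr_mx_mul mxE lw0 ?mem_nth.
have : (row (Ordinal jlt) (cstr_mx l') *m w^T) 0 0 = 0.
  by rewrite eD -mulmxA lw mulmx0 mxE.
by rewrite -row_mul mxE cstr_mx_mul /= nth_index //; apply/eqP.
Qed.

Lemma cstr_mx_ker (l : seq cstr) : (\rank (cstr_mx l) < n)%N ->
  exists2 w : 'rV[rat]_n, w != 0 & forall c, c \in l -> form c.1 w = 0.
Proof.
move=> rk_lt; set A := (cstr_mx l)^T.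
have : kermx A != 0.
  by rewrite -mxrank_eq0 mxrank_ker mxrank_tr -lt0n subn_gt0.
case/matrix0Pn => i [j kij]; exists (row i (kermx A)).
  by apply: contraNneq kij => /rowP /(_ j); rewrite !mxE => ->.
move=> c cl; have jlt : (index c l < size l)%N by rewrite index_mem.
have : row i (kermx A) *m A = 0 by rewrite -row_mul mulmx_ker row0.
move/matrixP => /(_ 0 (Ordinal jlt)); rewrite !mxE => <-.
by apply: eq_bigr => k _; rewrite !mxE nth_index // mulrC.
Qed.

(* Move from [y] along [w] until the first constraint decreasing along [w] becomes tight. *)
Lemma feasible_step cs y w : feasible cs y ->
  (forall c, c \in tight cs y -> form c.1 w = 0) ->
  (exists2 c, c \in cs & form c.1 w < 0) ->
  exists2 t : rat, 0 < t &
    feasible cs (y + t *: w) /\ (tight_rank cs y < tight_rank cs (y + t *: w))%N.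
Proof.
move=> fy tw0 [c1 c1cs c1w].
set N := [seq c <- cs | form c.1 w < 0].
pose ratio (c : cstr) := (form c.1 y - c.2%:~R) / - form c.1 w.
have c1N : c1 \in N by rewrite mem_filter c1w c1cs.
have N_neq0 : N != [::] by apply: contraTneq c1N => ->.
have [c0 + min_c0] := seq_argmin ratio N_neq0.
rewrite mem_filter => /andP [c0w c0cs].
have slack c : c \in cs -> form c.1 w < 0 -> c.2%:~R < form c.1 y.
  move=> ccs cw; rewrite lt_neqAle (allP fy c ccs) andbT.
  apply: contraTneq cw => cy; rewrite tw0 ?ltxx // mem_filter ccs andbT -cy.
  exact/eqP.
have ratio_ge0 c : c \in cs -> form c.1 w < 0 -> 0 < ratio c.
  by move=> ccs cw; rewrite divr_gt0 ?oppr_gt0 ?subr_gt0 ?slack.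
exists (ratio c0); first exact: ratio_ge0.
split.
  apply/allP => c ccs; rewrite linearD /= formZ.
  have := allP fy c ccs; have [cw|cw] := lerP 0 (form c.1 w).
    have : 0 <= ratio c0 * form c.1 w by rewrite mulr_ge0 // ltW ?ratio_ge0.
    lra.
  have /min_c0 : c \in N by rewrite mem_filter cw ccs.
  rewrite {2}/ratio ler_pdivlMr ?oppr_gt0 //; lra.
apply: (@cstr_mx_rank_lt _ _ w).
- move=> c; rewrite !mem_filter => /andP [/eqP cy ccs]; rewrite ccs andbT.
  by rewrite linearD /= formZ -cy tw0 ?mulr0 ?addr0 // mem_filter cy eqxx.
- exact: tw0.
exists c0; last by rewrite lt_eqF.
rewrite mem_filter c0cs andbT linearD /= formZ /ratio.
by apply/eqP; field; rewrite lt_eqF.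
Qed.

Lemma exists_vertex cs y : pointed cs -> feasible cs y ->
  exists2 y', feasible cs y' & tight_rank cs y' = n.
Proof.
move=> cs_pointed; move: {2}(n - tight_rank cs y)%N (leqnn (n - tight_rank cs y)) => k.
elim: k y => [|k IH] y k_ge fy.
  by exists y => //; apply/eqP; rewrite eqn_leq tight_rank_le; lia.
have [rk_n|] := eqVneq (tight_rank cs y) n; first by exists y.
rewrite neq_ltn [(n < _)%N]ltnNge tight_rank_le orbF => /cstr_mx_ker [w w_neq0 w_tight].
have [c ccs cw] := cs_pointed w w_neq0.
have [w' w'_tight w'_desc] : exists2 w', (forall c, c \in tight cs y -> form c.1 w' = 0)
    & exists2 c, c \in cs & form c.1 w' < 0.
  have [cw_lt0|cw_ge0] := ltrP (form c.1 w) 0; first by exists w => //; exists c.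
  exists (- w) => [c' /w_tight|]; first by rewrite linearN /= => ->; rewrite oppr0.
  by exists c; rewrite // linearN /= oppr_lt0 lt_neqAle eq_sym cw.
have [t _ [fyt rk_gt]] := feasible_step fy w'_tight w'_desc.
by apply: (IH (y + t *: w')) => //; have := tight_rank_le cs (y + t *: w'); lia.
Qed.

(* Cramer's rule on a nonsingular square subsystem [B y = b] of [l]:
   [D = |det B|] and [g = sg (det B) adj B b]. *)
Lemma cramer_bound (l : seq cstr) y (m : int) : 0 <= m -> \rank (cstr_mx l) = n ->
  (forall c, c \in l -> form c.1 y = c.2%:~R) ->
  (forall c, c \in l -> forall i, `|c.1 0 i| <= m) ->
  exists D : int, exists2 g : 'rV[int]_n, 0 < D &
    (forall i, y 0 i * D%:~R = (g 0 i)%:~R) /\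
    forall i, `|g 0 i| <= (n.-1)`!%:R * m ^+ n.-1 * \sum_(c <- l) `|c.2|.
Proof.
move=> m_ge0 rk_l ly l_m.
move: (maxrankfun (cstr_mx l)) (@maxrankfun_inj _ _ _ (cstr_mx l)) (maxrowsub_free (cstr_mx l)).
rewrite rk_l => f f_inj free_f.
pose B : 'M[int]_n := \matrix_(i, j) (nth cstr0 l (f i)).1 0 j.
pose b : 'cV[int]_n := \col_i (nth cstr0 l (f i)).2.
have fl i : nth cstr0 l (f i) \in l by exact: mem_nth.
have detB_neq0 : \det B != 0.
  have : rowsub f (cstr_mx l) = map_mx intr B by apply/matrixP => i j; rewrite !mxE.
  move: free_f; rewrite row_free_unit unitmxE unitfE => /[swap] ->.
  by rewrite det_map_mx intr_eq0.
have By : map_mx intr B *m y^T = map_mx intr b.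
  apply/matrixP => i j; rewrite ord1 !mxE -ly //.
  by apply: eq_bigr => k _; rewrite !mxE.
have detB_y : (\det B)%:~R *: y^T = map_mx intr (\adj B *m b).
  by rewrite map_mxM map_mx_adj -By mulmxA mul_adj_mx mul_scalar_mx det_map_mx.
pose G := \adj B *m b.
exists `|\det B|, (Num.sg (\det B) *: G)^T; first by rewrite normr_gt0.
split=> i.
  have Gi : (\det B)%:~R * y 0 i = (G i 0)%:~R.
    transitivity (((\det B)%:~R *: y^T) i 0); first by rewrite !mxE.
    by rewrite detB_y mxE.
  have -> : (Num.sg (\det B) *: G)^T 0 i = Num.sg (\det B) * G i 0 by rewrite !mxE.
  by rewrite normrEsg !intrM -Gi; ring.
have adjB_le j k : `|\adj B j k| <= (n.-1)`!%:R * m ^+ n.-1.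
  rewrite mxE /cofactor normrM normrX normrN1 expr1n mul1r.
  by apply: normr_det_le => p q; rewrite !mxE l_m.
rewrite !mxE normrM normr_sg detB_neq0 mul1r.
apply: le_trans (ler_norm_sum _ _ _) _.
apply: (@le_trans _ _ (\sum_j (n.-1)`!%:R * m ^+ n.-1 * `|b j 0|)).
  by apply: ler_sum => j _; rewrite normrM ler_wpM2r.
rewrite -mulr_sumr ler_wpM2l ?mulr_ge0 ?exprn_ge0 // (big_nth cstr0) big_mkord.
under eq_bigr do rewrite mxE.
exact (ler_sum_inj (F := fun k : 'I_(size l) => `|(nth cstr0 l k).2|) f_inj
  (fun=> normr_ge0 _)).
Qed.

Lemma feasible_sub_summand cs K (mu : 'I_K -> rat) (y : 'I_K -> 'rV[rat]_n) k :
  (forall c, c \in cs -> c.2 = 0) -> (forall l, 0 <= mu l) ->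
  (forall l, feasible cs (y l)) -> 1 <= mu k ->
  feasible cs (\sum_l mu l *: y l - y k).
Proof.
move=> cs0 mu_ge0 fy mu_ge1; apply/allP => c ccs; rewrite cs0 //.
have y_ge0 l : 0 <= form c.1 (y l) by have := allP (fy l) c ccs; rewrite cs0.
rewrite linearB linear_sum /= (bigD1 k) //= formZ.
have : 0 <= \sum_(l | l != k) form c.1 (mu l *: y l).
  by apply: sumr_ge0 => l _; rewrite formZ mulr_ge0.
have : 0 <= (mu k - 1) * form c.1 (y k) by rewrite mulr_ge0 // subr_ge0.
lra.
Qed.

Definition small_ray cs (R : int) (g : 'rV[int]_n) :=
  [/\ feasible cs (map_mx intr g), g != 0 & forall i, `|g 0 i| <= R].

Lemma integral_vertex cs y0 (m : int) : 0 <= m -> pointed cs -> feasible cs y0 ->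
  (forall c, c \in cs -> forall i, `|c.1 0 i| <= m) ->
  exists y (D : int) (g : 'rV[int]_n), [/\ feasible cs y, 0 < D,
    map_mx intr g = D%:~R *: y &
    forall i, `|g 0 i| <= (n.-1)`!%:R * m ^+ n.-1 * \sum_(c <- cs) `|c.2|].
Proof.
move=> m_ge0 cs_pointed fy0 cs_le; have [y fy rk_y] := exists_vertex cs_pointed fy0.
have tight_eq c : c \in tight cs y -> form c.1 y = c.2%:~R.
  by rewrite mem_filter => /andP [/eqP].
have tight_le c : c \in tight cs y -> forall i, `|c.1 0 i| <= m.
  by rewrite mem_filter => /andP [_ /cs_le].
have [D [g D_gt0 [yDg g_le]]] := cramer_bound m_ge0 rk_y tight_eq tight_le.
exists y, D, g; split => // [|i].
  by apply/matrixP => a b; rewrite ord1 !mxE -yDg mulrC.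
apply: le_trans (g_le i) _; rewrite ler_wpM2l ?mulr_ge0 ?exprn_ge0 //.
by rewrite big_filter big_mkcond ler_sum // => c _; case: ifP.
Qed.

Section Cone.
Variables (cs : seq cstr) (m : int).
Hypotheses (m_ge0 : 0 <= m) (cs_pointed : pointed cs) (cs0 : forall c, c \in cs -> c.2 = 0)
  (cs_le : forall c, c \in cs -> forall i, `|c.1 0 i| <= m).
Local Notation R := ((n.-1)`!%:R * m ^+ n.-1).

(* [g] is an integral multiple of a vertex of the polytope obtained by cutting the face
   of the cone containing [v] with the half-space [form c1.1 y >= 1]. *)
Lemma small_ray_through v c1 : feasible cs v -> c1 \in cs -> 0 < form c1.1 v ->
  exists g : 'rV[int]_n, [/\ small_ray cs R g,
     forall c, c \in tight cs v -> form c.1 (map_mx intr g) = 0 &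
     0 < form c1.1 (map_mx intr g)].
Proof.
move=> fv c1cs c1v.
pose cs' := cs ++ [seq (- c.1, 0) | c <- tight cs v] ++ [:: (c1.1, 1)].
have cs'_pointed : pointed cs'.
  by move=> w /cs_pointed [c ccs cw]; exists c; rewrite ?mem_cat ?ccs.
have fv' : feasible cs' ((form c1.1 v)^-1 *: v).
  rewrite /feasible !all_cat /= andbT; apply/and3P; split.
  - apply/allP => c ccs; have := allP fv c ccs; rewrite formZ cs0 //= => cv.
    by rewrite mulr_ge0 // invr_ge0 ltW.
  - apply/allP => _ /mapP [c + ->]; rewrite mem_filter => /andP [/eqP cv ccs].
    by rewrite formZ formNl cv (cs0 ccs) oppr0 mulr0.
  - by rewrite formZ mulVf ?gt_eqF.
have cs'_le c : c \in cs' -> forall i, `|c.1 0 i| <= m.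
  rewrite !mem_cat => /or3P [/cs_le //||].
    by case/mapP => c' + -> i; rewrite mem_filter mxE normrN => /andP [_ /cs_le].
  by rewrite inE => /eqP -> /=; apply: cs_le.
have [y [D [g [fy D_gt0 gE g_le]]]] := integral_vertex m_ge0 cs'_pointed fv' cs'_le.
have y_ge0 c : c \in cs -> 0 <= form c.1 y.
  by move=> ccs; have := allP fy c; rewrite mem_cat ccs cs0 //; apply.
have D_gt0' : (0 : rat) < D%:~R by rewrite ltr0z.
have g_tight c : c \in tight cs v -> form c.1 (map_mx intr g) = 0.
  move=> ctv; have ccs : c \in cs by move: ctv; rewrite mem_filter => /andP [].
  have /(allP fy) : (- c.1, 0) \in cs' by rewrite !mem_cat map_f ?orbT.
  rewrite /= formNl oppr_ge0 => cy_le0.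
  have cy0 : form c.1 y = 0 by apply/le_anti; rewrite cy_le0 y_ge0.
  by rewrite gE formZ cy0 mulr0.
have g_c1 : 0 < form c1.1 (map_mx intr g).
  have /(allP fy) /= : (c1.1, 1) \in cs' by rewrite !mem_cat mem_seq1 eqxx !orbT.
  by rewrite gE formZ => c1y; rewrite mulr_gt0 // (lt_le_trans ltr01).
exists g; split => //; split.
- by apply/allP => c ccs; rewrite cs0 // gE formZ mulr_ge0 ?y_ge0 // ltW.
- by apply/eqP => g0; move: g_c1; rewrite g0 map_mx0 linear0 ltxx.
- move=> i; apply: le_trans (g_le i) _; rewrite ler_piMr ?mulr_ge0 ?exprn_ge0 //.
  rewrite !big_cat big_map /= big_seq1 normr1 !big1_seq ?add0r // => c ccs.
  by rewrite cs0 ?normr0.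
Qed.

Lemma cone_decomposition v : feasible cs v ->
  exists K (mu : nat -> rat) (g : nat -> 'rV[int]_n),
   [/\ (K <= n)%N, forall k, (k < K)%N -> 0 <= mu k /\ small_ray cs R (g k) &
       v = \sum_(k < K) mu k *: map_mx intr (g k)].
Proof.
suff rank_ind k y : (n - tight_rank cs y < k)%N -> feasible cs y ->
  exists K (mu : nat -> rat) (g : nat -> 'rV[int]_n),
   [/\ (K <= n - tight_rank cs y)%N,
       forall k, (k < K)%N -> 0 <= mu k /\ small_ray cs R (g k) &
       y = \sum_(k < K) mu k *: map_mx intr (g k)].
  move=> fv; have [K [mu [g [K_le ray_g vE]]]] := rank_ind _ v (ltnSn _) fv.
  by exists K, mu, g; split => //; apply: leq_trans K_le (leq_subr _ _).
elim: k y => [//|k IH] y k_gt fy.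
have [->|y_neq0] := eqVneq y 0.
  by exists 0%N, (fun=> 0), (fun=> 0); rewrite big_ord0.
have [c1 c1cs c1y] := cs_pointed y_neq0.
have c1y_gt0 : 0 < form c1.1 y.
  by have := allP fy c1 c1cs; rewrite (cs0 c1cs) lt_neqAle eq_sym c1y.
have [g [ray_g g_tight g_c1]] := small_ray_through fy c1cs c1y_gt0.
have g_tight' c : c \in tight cs y -> form c.1 (- map_mx intr g) = 0.
  by move=> /g_tight; rewrite linearN /= => ->; rewrite oppr0.
have g_desc : exists2 c, c \in cs & form c.1 (- map_mx intr g) < 0.
  by exists c1; rewrite // linearN /= oppr_lt0.
have [t t_gt0 [+ +]] := feasible_step fy g_tight' g_desc.
set y' := y + _ => fy' rk_gt; have rk_le := tight_rank_le cs y'.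
have /IH /(_ fy') [K [mu [g' [K_le ray_g' y'E]]]] : (n - tight_rank cs y' < k)%N by lia.
exists K.+1, (fun j => if j is j'.+1 then mu j' else t).
exists (fun j => if j is j'.+1 then g' j' else g); split; first lia.
- by case=> [_|j /ray_g' //]; split => //; apply: ltW.
- by rewrite big_ord_recl /= -y'E /y' scalerN addrC subrK.
Qed.

End Cone.
End Polyhedra.

Definition ineq d := (('I_d -> int) * int)%type.
Definition ineq_norm d (p : ineq d) := maxn (vnorm p.1) `|p.2|%N.
Definition ineqs_sat d (cs : seq (ineq d)) x := all (fun p : ineq d => p.2 <= dotp p.1 x) cs.

Lemma vnorm_ge d (a : 'I_d -> int) i : `|a i| <= (vnorm a)%:Z.
Proof. by rewrite -abszE lez_nat /vnorm (leq_bigmax i). Qed.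

Lemma norm1Z d (x : 'I_d -> int) : (norm1 x)%:Z = \sum_i `|x i|.
Proof.
rewrite /norm1 (big_morph Posz PoszD (erefl _)).
by apply: eq_bigr => i _; rewrite abszE.
Qed.

Lemma dotp_intr d (a x : 'I_d -> int) :
  (dotp a x)%:~R = \sum_i (a i)%:~R * (x i)%:~R :> rat.
Proof. by rewrite /dotp rmorph_sum; apply: eq_bigr => i _; exact: intrM. Qed.

Lemma weights_le1 (R : realDomainType) K (mu : 'I_K -> R) (t : 'I_K -> int) :
  (forall k, 0 <= mu k) -> (forall k, 0 <= t k) -> \sum_k mu k * (t k)%:~R = 1 ->
  (forall k, t k = 0 -> mu k <= 1) -> forall k, mu k <= 1.
Proof.
move=> mu_ge0 t_ge0 + mu_le1 k; have [/mu_le1 //|tk_neq0] := eqVneq (t k) 0.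
have tk_ge1 : 1 <= (t k)%:~R :> R.
  by rewrite ler1z -gtz0_ge1 lt_neqAle eq_sym tk_neq0 t_ge0.
rewrite (bigD1 k) //=.
have : 0 <= \sum_(l | l != k) mu l * (t l)%:~R.
  by apply: sumr_ge0 => l _; rewrite mulr_ge0 ?ler0z.
have : mu k <= mu k * (t k)%:~R by rewrite -{1}[mu k]mulr1 ler_wpM2l.
lra.
Qed.

Section Homogenization.
Variable d : nat.
Local Notation n := d.+1.

(* Points [x] of Z^d are embedded as [(x, t)] in Q^(d+1), the last coordinate [ord_max]
   being the homogenizing variable [t]. *)
Definition hom_vec (x : 'I_d -> int) (t : rat) : 'rV[rat]_n :=
  \row_i (if unlift ord_max i is Some j then (x j)%:~R else t).
Definition hom_row (a : 'I_d -> int) (b : int) : 'rV[int]_n :=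
  \row_i (if unlift ord_max i is Some j then a j else - b).
Definition sign_row (s : 'I_d -> int) (j : 'I_d) : 'rV[int]_n :=
  \row_i (if unlift ord_max i is Some k then (if k == j then s j else 0) else 0).
Definition last_row : 'rV[int]_n := \row_i (if unlift ord_max i is Some _ then 0 else 1).

Lemma hom_vecE x t j : hom_vec x t 0 (lift ord_max j) = (x j)%:~R.
Proof. by rewrite mxE liftK. Qed.

Lemma hom_vec_last x t : hom_vec x t 0 ord_max = t.
Proof. by rewrite mxE unlift_none. Qed.

Lemma form_lift (a : 'rV[int]_n) (y : 'rV[rat]_n) :
  form a y = \sum_j (a 0 (lift ord_max j))%:~R * y 0 (lift ord_max j)
             + (a 0 ord_max)%:~R * y 0 ord_max.
Proof.
rewrite /form big_ord_recr /=; congr (_ + _); apply: eq_bigr => j _.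
rewrite (_ : lift _ _ = widen_ord (leqnSn d) j) //.
by apply: val_inj; rewrite /= /bump leqNgt ltn_ord.
Qed.

Lemma form_hom_row a b y :
  form (hom_row a b) y = \sum_j (a j)%:~R * y 0 (lift ord_max j) - b%:~R * y 0 ord_max.
Proof.
rewrite form_lift !mxE unlift_none intrN mulNr; congr (_ - _).
by apply: eq_bigr => j _; rewrite !mxE liftK.
Qed.

Lemma form_hom_row_vec a b x : form (hom_row a b) (hom_vec x 1) = (dotp a x - b)%:~R.
Proof.
rewrite form_hom_row hom_vec_last mulr1 intrB dotp_intr; congr (_ - _).
by apply: eq_bigr => j _; rewrite hom_vecE.
Qed.

Lemma form_sign_row s j y : form (sign_row s j) y = (s j)%:~R * y 0 (lift ord_max j).
Proof.
rewrite form_lift !mxE unlift_none mul0r addr0 (bigD1 j) //= big1 ?addr0.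
  by rewrite !mxE liftK eqxx.
by move=> k /negPf kj; rewrite !mxE liftK kj mul0r.
Qed.

Lemma form_last_row y : form last_row y = y 0 ord_max.
Proof.
rewrite form_lift !mxE unlift_none mul1r big1 ?add0r // => k _.
by rewrite !mxE liftK mul0r.
Qed.

Section Orthant.
Variables (cs : seq (ineq d)) (m : nat) (s : 'I_d -> int).
Hypotheses (m_gt0 : (0 < m)%N) (cs_le : all (fun p => ineq_norm p <= m)%N cs)
  (s_sign : forall i, `|s i| = 1).

Definition in_orthant (x : 'I_d -> int) := [forall i, 0 <= s i * x i].

(* The homogenized cone: [a.x >= b t] for [(a, b)] in [cs], the orthant, and [t >= 0]. *)
Definition hrows : seq 'rV[int]_n :=
  [seq hom_row p.1 p.2 | p <- cs] ++ [seq sign_row s j | j <- enum 'I_d] ++ [:: last_row].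
Definition hcone : seq (cstr n) := [seq (r, 0) | r <- hrows].

Lemma sign_row_hcone j : (sign_row s j, 0) \in hcone.
Proof. by rewrite map_f // !mem_cat map_f ?mem_enum ?orbT. Qed.

Lemma last_row_hcone : (last_row, 0) \in hcone.
Proof. by rewrite map_f // !mem_cat mem_seq1 eqxx !orbT. Qed.

Lemma hcone0 c : c \in hcone -> c.2 = 0.
Proof. by case/mapP => r _ ->. Qed.

Lemma hcone_le c : c \in hcone -> forall i, `|c.1 0 i| <= m%:Z.
Proof.
suff /allP hr : all (fun r : 'rV[int]_n => [forall i, `|r 0 i| <= m%:Z]) hrows.
  by case/mapP => r /hr /forallP + ->.
have m_ge1 : 1 <= m%:Z by rewrite lez_nat.
rewrite !all_cat all_map /= andbT; apply/and3P; split.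
- apply: sub_all cs_le => p /= p_le; apply/forallP => i; rewrite mxE.
  case: (unlift ord_max i) => [k|]; last first.
    by rewrite normrN -abszE lez_nat (leq_trans _ p_le) ?leq_maxr.
  by apply: le_trans (vnorm_ge _ k) _; rewrite lez_nat (leq_trans _ p_le) ?leq_maxl.
- apply/allP => _ /mapP [j _ ->]; apply/forallP => i; rewrite mxE.
  case: (unlift ord_max i) => [k|]; last by rewrite normr0.
  by case: ifP => _; rewrite ?s_sign ?normr0.
- by apply/forallP => i; rewrite mxE; case: (unlift ord_max i) => [k|]; rewrite ?normr0 ?normr1.
Qed.

Lemma hcone_pointed : pointed hcone.
Proof.
move=> w /matrix0Pn [i [i' w_neq0]]; rewrite ord1 in w_neq0.
case: (unliftP ord_max i') w_neq0 => [j ->|->] w_neq0.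
  exists (sign_row s j, 0); rewrite ?sign_row_hcone // form_sign_row mulf_neq0 //.
  by rewrite intr_eq0 -normr_eq0 s_sign.
by exists (last_row, 0); rewrite ?last_row_hcone // form_last_row.
Qed.

Lemma feasible_hcone x : feasible hcone (hom_vec x 1) = ineqs_sat cs x && in_orthant x.
Proof.
rewrite /feasible all_map !all_cat !all_map /= form_last_row hom_vec_last mulr0z ler01.
rewrite !andbT -enumT; congr (_ && _).
  by apply: eq_all => p; rewrite /= form_hom_row_vec ler_int subr_ge0.
apply/allP/forallP => [orth j|orth j _] /=.
  by have := orth j (mem_enum _ j); rewrite /= form_sign_row hom_vecE -intrM ler_int.
by rewrite form_sign_row hom_vecE -intrM ler_int.
Qed.

Lemma norm1_orthant x : in_orthant x -> (norm1 x)%:Z = \sum_i s i * x i.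
Proof.
move=> /forallP x_orth; rewrite norm1Z; apply: eq_bigr => i _.
by rewrite -[`|x i|]mul1r -(s_sign i) -normrM ger0_norm.
Qed.

Lemma norm1_orthant_sub_lt x u : in_orthant x -> in_orthant u ->
  in_orthant (fun i => x i - u i) -> (exists i, u i != 0) ->
  (norm1 (fun i => (x i - u i)%R) < norm1 x)%N.
Proof.
move=> x_orth /forallP u_orth xu_orth [i ui_neq0].
rewrite -ltz_nat !norm1_orthant //.
under eq_bigr do rewrite mulrBr.
rewrite sumrB ltrBlDr ltrDl (bigD1 i) //= ltr_pwDl ?sumr_ge0 //.
by rewrite lt_neqAle eq_sym mulf_neq0 ?u_orth // -normr_eq0 s_sign.
Qed.

Local Notation bound := (d * d.+1 * d`! * m ^ d)%N.

Section Decomposition.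
Variables (x : 'I_d -> int) (K : nat) (mu : 'I_K -> rat) (g : 'I_K -> 'rV[int]_n).
Hypotheses (x_orth : in_orthant x) (mu_ge0 : forall k, 0 <= mu k)
  (g_feas : forall k, feasible hcone (map_mx intr (g k)))
  (xE : hom_vec x 1 = \sum_k mu k *: map_mx intr (g k)).

Lemma ray_hcone_ge0 k c : c \in hcone -> 0 <= form c.1 (map_mx intr (g k)).
Proof. by move=> cc; have := allP (g_feas k) c cc; rewrite hcone0. Qed.

Lemma ray_orthant k j : 0 <= s j * g k 0 (lift ord_max j).
Proof. by have := ray_hcone_ge0 k (sign_row_hcone j); rewrite form_sign_row mxE -intrM ler0z. Qed.

(* A ray with [t = 0] lies in the recession cone, so it can be subtracted from [x]. *)
Lemma decomposition_sub_ray k : g k 0 ord_max = 0 -> 1 < mu k -> g k != 0 ->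
  exists2 x', ineqs_sat cs x' && in_orthant x' & (norm1 x' < norm1 x)%N.
Proof.
move=> gk_last mu_gt1 gk_neq0; pose u j := g k 0 (lift ord_max j).
have x'E : hom_vec (fun j => x j - u j) 1 =
    \sum_l mu l *: map_mx intr (g l) - map_mx intr (g k).
  rewrite -xE; apply/matrixP => a i; rewrite ord1 !mxE.
  by case: (unliftP ord_max i) => [j ->|->]; rewrite ?liftK ?unlift_none ?intrB ?gk_last ?subr0.
have : feasible hcone (hom_vec (fun j => x j - u j) 1).
  by rewrite x'E; apply: feasible_sub_summand => //; [exact: hcone0 | exact: ltW].
rewrite feasible_hcone => x'_ok; exists (fun j => x j - u j) => //.
case/andP: x'_ok => _ x'_orth; apply: norm1_orthant_sub_lt => //.
  by apply/forallP => j; apply: ray_orthant.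
move/matrix0Pn: gk_neq0 => [i0 [i' gki]]; rewrite ord1 in gki.
by case: (unliftP ord_max i') gki => [j ->|->] gki; [exists j | rewrite gk_last eqxx in gki].
Qed.

Lemma decomposition_bound : (K <= d.+1)%N ->
  (forall k i, `|g k 0 i| <= (d`! * m ^ d)%N%:Z) ->
  (forall k, g k 0 ord_max = 0 -> mu k <= 1) -> (norm1 x <= bound)%N.
Proof.
move=> K_le g_le mu_le1_flat.
have mu_le1 : forall k, mu k <= 1.
  apply: weights_le1 mu_ge0 _ _ mu_le1_flat => [k|].
    by have := ray_hcone_ge0 k last_row_hcone; rewrite form_last_row mxE ler0z.
  rewrite -[RHS](hom_vec_last x) xE summxE.
  by apply: eq_bigr => k _; rewrite !mxE.
set R := (d`! * m ^ d)%N.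
have x_le j : (`|x j| <= d.+1 * R)%N.
  rewrite -lez_nat -(ler_int rat) abszE.
  have := forallP x_orth j; rewrite -[`|x j|]mul1r -(s_sign j) -normrM => /ger0_norm ->.
  rewrite intrM -(hom_vecE x 1) xE summxE mulr_sumr.
  apply: (@le_trans _ _ (\sum_(k < K) R%:R)).
    apply: ler_sum => k _; rewrite !mxE mulrCA -intrM.
    apply: le_trans (ler_piMl _ (mu_le1 k)) _; first by rewrite ler0z ray_orthant.
    rewrite -[R%:R]/(R%:Z%:~R) ler_int (le_trans (ler_norm _)) //.
    by rewrite normrM s_sign mul1r g_le.
  rewrite sumr_const card_ord -mulrnA -[(n * R)%N%:~R]/((n * R)%:R) ler_nat.
  by rewrite mulnC leq_mul2r K_le orbT.
apply: (@leq_trans (\sum_(j < d) d.+1 * R)); first by apply: leq_sum => j _.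
by rewrite sum_nat_const card_ord /R !mulnA.
Qed.

End Decomposition.

Lemma orthant_descent x : ineqs_sat cs x -> in_orthant x ->
  (exists2 x', ineqs_sat cs x' && in_orthant x' & (norm1 x' < norm1 x)%N) \/
  (norm1 x <= bound)%N.
Proof.
move=> x_sat x_orth; have m_ge0 : 0 <= m%:Z by [].
have : feasible hcone (hom_vec x 1) by rewrite feasible_hcone x_sat.
case/(cone_decomposition m_ge0 hcone_pointed hcone0 hcone_le) => K [mu [g [K_le ray_g xE]]].
have mu_ge0 (k : 'I_K) : 0 <= mu k by case: (ray_g k (ltn_ord k)).
have g_feas (k : 'I_K) : feasible hcone (map_mx intr (g k)).
  by case: (ray_g k (ltn_ord k)) => _ [].
have [/existsP [k /andP [/eqP gk_last mu_gt1]]|/existsPn mu_le1] :=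
  boolP [exists k : 'I_K, (g k 0 ord_max == 0) && (1 < mu k)].
  left; apply: (decomposition_sub_ray x_orth mu_ge0 g_feas xE gk_last mu_gt1).
  by case: (ray_g k (ltn_ord k)) => _ [].
right; apply: (decomposition_bound x_orth mu_ge0 g_feas xE K_le).
  move=> k i; case: (ray_g k (ltn_ord k)) => _ [_ _ /(_ i)].
  by rewrite PoszM -!natz natrX.
by move=> k gk0; have := mu_le1 k; rewrite gk0 eqxx /= -leNgt.
Qed.

Lemma orthant_small_solution x : ineqs_sat cs x -> in_orthant x ->
  exists2 x', ineqs_sat cs x' & (norm1 x' <= bound)%N.
Proof.
move: {2}(norm1 x).+1 (ltnSn (norm1 x)) => N; elim: N x => // N IH x x_lt x_sat x_orth.
have [[x' /andP [x'_sat x'_orth] x'_lt]|x_le] := orthant_descent x_sat x_orth.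
  exact: (IH x') (leq_trans x'_lt x_lt) x'_sat x'_orth.
by exists x.
Qed.

End Orthant.
End Homogenization.

Lemma ilp_small_solution d (cs : seq (ineq d)) (m : nat) x0 : (0 < m)%N ->
  all (fun p => ineq_norm p <= m)%N cs -> ineqs_sat cs x0 ->
  exists2 x, ineqs_sat cs x & (norm1 x <= d * d.+1 * d`! * m ^ d)%N.
Proof.
move=> m_gt0 cs_le x0_sat; pose s i : int := if 0 <= x0 i then 1 else -1.
apply: (@orthant_small_solution _ _ _ s m_gt0 cs_le _ x0 x0_sat).
  by move=> i; rewrite /s; case: ifP; rewrite ?normrN normr1.
apply/forallP => i; rewrite /s; case: ifP => [|/negbT]; rewrite ?mul1r ?mulN1r //.
by rewrite oppr_ge0 -ltNge => /ltW.
Qed.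

Section Literals.
Variable d : nat.
Implicit Types (x : 'I_d -> int) (S : lsys d).

Definition oppv (a : 'I_d -> int) : 'I_d -> int := fun i => - a i.

Lemma dotpNl a x : dotp (oppv a) x = - dotp a x.
Proof. by rewrite /dotp -sumrN; apply: eq_bigr => i _; rewrite mulNr. Qed.

Lemma vnorm_opp a : vnorm (oppv a) = vnorm a.
Proof. by apply: eq_bigr => i _; rewrite abszN. Qed.

(* Inequalities satisfied by [x0] that force each (in)equality atom to keep its truth
   value at [x0]. *)
Definition atom_lits x0 (k : constr d) : seq (ineq d) :=
  match k with
  | CEq a c => if dotp a x0 == c then [:: (a, c); (oppv a, - c)]
               else if c < dotp a x0 then [:: (a, c + 1)] else [:: (oppv a, 1 - c)]
  | CGe a c => if c <= dotp a x0 then [:: (a, c)] else [:: (oppv a, 1 - c)]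
  | CDvd _ _ _ => [::]
  end.

Fixpoint lits x0 S : seq (ineq d) :=
  match S with
  | LTrue | LFalse => [::]
  | LAtom k => atom_lits x0 k
  | LNot S1 => lits x0 S1
  | LAnd S1 S2 | LOr S1 S2 => lits x0 S1 ++ lits x0 S2
  end.

Lemma lits_sat x0 S : ineqs_sat (lits x0 S) x0.
Proof.
rewrite /ineqs_sat; elim: S => //= [[a c|a c|//]|S1 IH1 S2 IH2|S1 IH1 S2 IH2] /=;
  rewrite ?all_cat ?IH1 ?IH2 //.
- case: eqP => [e|ne] /=; first by rewrite dotpNl e !lexx.
  by case: ltrP => /=; rewrite ?dotpNl; lia.
- by case: lerP => /=; rewrite ?dotpNl; lia.
Qed.

Lemma lsys_sat_lits x0 S (L : nat) x : (lsys_lcm S %| L)%N ->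
  (forall i, (L%:Z %| x i - x0 i)%Z) -> ineqs_sat (lits x0 S) x ->
  lsys_sat S x = lsys_sat S x0.
Proof.
move=> + x_x0; rewrite /ineqs_sat.
elim: S => //= [[a c|a c|m a c]|S1 IH L_div /(IH L_div) ->//|S1 IH1 S2 IH2|S1 IH1 S2 IH2] /=.
- move=> _; case: eqP => [e|ne] /=; rewrite ?dotpNl.
    by move=> /and3P [? ? _]; apply/eqP; lia.
  by case: ltrP => /= ?; rewrite ?dotpNl => /andP [? _]; apply/eqP; lia.
- by move=> _; case: lerP => /= ?; rewrite ?dotpNl => /andP [? _]; lia.
- move=> m_L _; rewrite !eqz_mod_dvd.
  have m_dvd : (m%:Z %| dotp (fun i => (a i)%:Z) x - dotp (fun i => (a i)%:Z) x0)%Z.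
    rewrite /dotp -sumrB rpred_sum // => i _; rewrite -mulrBr dvdz_mull //.
    by apply: dvdz_trans (x_x0 i); rewrite dvdzE.
  by rewrite -(subrK (dotp (fun i => (a i)%:Z) x0) (dotp _ x)) -addrA rpredDl.
all: move=> L_div; rewrite all_cat => /andP [sat1 sat2].
all: have L1 : (lsys_lcm S1 %| L)%N by apply: dvdn_trans L_div; apply: dvdn_lcml.
all: have L2 : (lsys_lcm S2 %| L)%N by apply: dvdn_trans L_div; apply: dvdn_lcmr.
all: by rewrite (IH1 L1 sat1) (IH2 L2 sat2).
Qed.

Lemma lits_norm x0 S :
  all (fun p : ineq d => (vnorm p.1 <= lsys_norm S) && (`|p.2| <= (lsys_norm S).+1))%N
    (lits x0 S).
Proof.
elim: S => //= [[a c|a c|//]|S1 IH1 S2 IH2|S1 IH1 S2 IH2] /=.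
- by case: ifP => _ /=; rewrite ?vnorm_opp; [|case: ifP => _ /=]; rewrite ?vnorm_opp; lia.
- by case: ifP => _ /=; rewrite ?vnorm_opp; lia.
all: rewrite all_cat; apply/andP; split; [apply: sub_all IH1 | apply: sub_all IH2].
all: by move=> p /andP [? ?]; lia.
Qed.

Lemma lsys_lcm_gt0 S : lsys_wf S -> (0 < lsys_lcm S)%N.
Proof.
elim: S => //= [[a c|a c|m a c] //= /and3P []//|S1 IH1 S2 IH2|S1 IH1 S2 IH2].
all: by case/andP => /IH1 ? /IH2 ?; rewrite lcmn_gt0; apply/andP.
Qed.

End Literals.

Lemma normz_divz_le (z M L : int) : 0 < L -> `|z| <= M * L -> `|(z %/ L)%Z| <= M.
Proof.
move=> L_gt0; rewrite !ler_norml => /andP [z_ge z_le]; apply/andP; split.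
  by rewrite lez_divRL // mulNr.
by rewrite -ltzD1 ltz_divLR // mulrDl mul1r (le_lt_trans z_le) // ltrDl.
Qed.

Section Reduction.
Variables (d L : nat) (r : 'I_d -> int).
Hypotheses (L_gt0 : (0 < L)%N) (r_bnd : forall i, 0 <= r i < L%:Z).

(* Substituting [x = L q + r] in [a.x >= c] yields [a.q >= - floor((a.r - c) / L)]. *)
Definition shift_ineq (p : ineq d) : ineq d := (p.1, - ((dotp p.1 r - p.2) %/ L%:Z)%Z).

Lemma shift_ineqs_sat cs q x : (forall i, x i = q i * L%:Z + r i) ->
  ineqs_sat (map shift_ineq cs) q = ineqs_sat cs x.
Proof.
move=> xE; rewrite /ineqs_sat all_map; apply: eq_all => p /=.
have -> : dotp p.1 x = dotp p.1 q * L%:Z + dotp p.1 r.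
  by rewrite /dotp mulr_suml -big_split; apply: eq_bigr => i _ /=; rewrite xE; ring.
by rewrite lerNl lez_divRL ?ltz_nat // mulNr; set A := (_ * L%:Z); lia.
Qed.

Lemma shift_ineq_norm s p : (vnorm p.1 <= s)%N -> (`|p.2| <= s.+1)%N ->
  (ineq_norm (shift_ineq p) <= d * s + s + 1)%N.
Proof.
move=> a_le c_le; rewrite /ineq_norm geq_max /=; apply/andP; split; first lia.
rewrite abszN -lez_nat abszE normz_divz_le ?ltz_nat //.
have ar_le : `|dotp p.1 r| <= (d * s)%N%:Z * L%:Z.
  apply: le_trans (ler_norm_sum _ _ _) _.
  apply: (@le_trans _ _ (\sum_(i < d) s%:Z * L%:Z)).
    apply: ler_sum => i _; rewrite normrM ler_pM ?normr_ge0 //.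
      by apply: le_trans (vnorm_ge _ i) _; rewrite lez_nat.
    by case/andP: (r_bnd i) => r_ge0 r_lt; rewrite ger0_norm // ltW.
  by rewrite sumr_const card_ord -mulr_natl mulrA natz PoszM.
apply: le_trans (ler_normB _ _) _; rewrite !PoszD !mulrDl mul1r -addrA lerD //.
have L_ge1 : 1 <= L%:Z by rewrite lez_nat.
have c_le' : `|p.2| <= s%:Z + 1 by rewrite -abszE; lia.
nia.
Qed.

Lemma norm1_affine q :
  (norm1 (fun i => (q i * L%:Z + r i)%R) <= L * (norm1 q + d))%N.
Proof.
apply: (@leq_trans (\sum_i (L * `|q i| + L))%N).
  apply: leq_sum => i _; rewrite -lez_nat PoszD PoszM !abszE.
  apply: le_trans (ler_normD _ _) _; rewrite normrM [`|L%:Z|]ger0_norm // mulrC.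
  by case/andP: (r_bnd i) => r_ge0 r_lt; rewrite lerD // ger0_norm // ltW.
by rewrite big_split /= sum_nat_const card_ord -big_distrr mulnDr [(d * L)%N]mulnC.
Qed.

End Reduction.

Lemma factS_leq_exp k : (k.+1`! <= k.+1 ^ k)%N.
Proof.
elim: k => // k IH; rewrite factS expnS leq_mul2l /=.
by apply: leq_trans IH _; case: k => // k; rewrite leq_exp2r.
Qed.

Lemma ilp_bound_le d s :
  (d * d.+1 * d`! * (d * s + s + 1) ^ d <= (2 + d + d ^ 2 * s) ^ (2 * d + 1))%N.
Proof.
case: d => [|[|d]]; first by rewrite !mul0n.
  by rewrite !mul1n expn1 !expnS expn0 muln1 (_ : 1`! = 1)%N //=; nia.
set D := d.+2; set M := (2 + D + D ^ 2 * s)%N.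
have m_le : (D * s + s + 1 <= M)%N by rewrite /M /D; nia.
have coef_le : (D * D.+1 * D`! <= M ^ D.+1)%N.
  rewrite -mulnA -factS; apply: (@leq_trans (D * D.+1 ^ D)).
    by rewrite leq_mul2l factS_leq_exp orbT.
  apply: (@leq_trans (D.+2 ^ D.+1)); last by rewrite leq_exp2r // /M; nia.
  by rewrite expnS leq_mul ?leq_exp2r // -addn2 leq_addr.
have -> : (2 * D + 1 = D.+1 + D)%N by lia.
by rewrite expnD leq_mul // leq_exp2r.
Qed.

Unset Implicit Arguments.
Theorem theorem2 (d : nat) (S : lsys d) :
  lsys_wf S ->
  (exists x : 'I_d -> int, lsys_sat S x) ->
  exists x : 'I_d -> int, lsys_sat S x /\
    (norm1 x <= lsys_lcm S * (d + (2 + d + d ^ 2 * lsys_norm S) ^ (2 * d + 1)))%N.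
Proof.
move=> S_wf [x0 x0_sat]; set L := lsys_lcm S; set s := lsys_norm S.
have L_gt0 : (0 < L)%N := lsys_lcm_gt0 S_wf.
pose r i := (x0 i %% L%:Z)%Z; pose q0 i := (x0 i %/ L%:Z)%Z.
have r_bnd i : 0 <= r i < L%:Z by rewrite modz_ge0 ?ltz_pmod ?ltz_nat // gt_eqF ?ltz_nat.
have x0E i : x0 i = q0 i * L%:Z + r i by exact: divz_eq.
pose cs := map (shift_ineq L r) (lits x0 S).
have cs_le : all (fun p => ineq_norm p <= d * s + s + 1)%N cs.
  rewrite all_map; apply: sub_all (lits_norm x0 S) => p /andP [a_le c_le].
  exact: (shift_ineq_norm (s := s) L_gt0 r_bnd a_le c_le).
have q0_sat : ineqs_sat cs q0 by rewrite (shift_ineqs_sat L_gt0 _ x0E) lits_sat.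
have m_gt0 : (0 < d * s + s + 1)%N by rewrite addn1.
have [q q_sat q_le] := ilp_small_solution m_gt0 cs_le q0_sat.
exists (fun i => q i * L%:Z + r i); split.
  rewrite (lsys_sat_lits (x0 := x0) (dvdnn L)) //.
    by move=> i; rewrite x0E opprD addrACA subrr addr0 -mulrBl dvdz_mull.
  by rewrite -(shift_ineqs_sat L_gt0 _ (fun i => erefl)).
apply: leq_trans (norm1_affine r_bnd q) _.
by rewrite leq_mul2l addnC leq_add2l (leq_trans q_le) ?ilp_bound_le ?orbT.
Qed.
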